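(* Let $\nu\in\mathbb C$, let $I\subset\mathbb R$ be an open interval, and let $a:I\to\mathbb C$ be twice differentiable, nowhere zero, and satisfy $$4a^3\ddot a=(3a^4+2ta^2-\nu)(a^4+2ta^2+\nu).$$ Let $\epsilon\in\{+1,-1\}$ and put $Y=\frac{\nu}{2a^2}-\frac{a^2}{2}-t-\epsilon\frac{\dot a}{a}$. If $y:I\to\mathbb C$ is twice differentiable, nowhere zero, with $y^2=Y$, then $$2y\dot y=-\epsilon\big(\nu+\epsilon-2a^2y^2-y^4-2ty^2\big),$$ and $y$ satisfies the same equation with $\nu$ replaced by $\nu+\epsilon$: $$4y^3\ddot y=(3y^4+2ty^2-(\nu+\epsilon))(y^4+2ty^2+\nu+\epsilon).$$
   Context: Dots denote $d/dt$. *)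

From Stdlib Require Import Reals.
From Coquelicot Require Import Coquelicot.

Definition rbar_open_interval (l u : Rbar) (t : R) : Prop :=
  Rbar_lt l t /\ Rbar_lt t u.

Definition twice_deriv_on (I : R -> Prop) (f f1 f2 : R -> C) : Prop :=
  forall t, I t -> is_derive f t (f1 t) /\ is_derive f1 t (f2 t).

(* Since y^2 = Y, the defining relation of Y can be read as a formula for
   a' in terms of a, y^2 and t.  Differentiating the identity
   a^2 y^2 = nu/2 - a^4/2 - t a^2 - eps a a' and eliminating a'' with the
   equation of a and a' with that formula gives the Riccati equation for y^2.
   Differentiating the Riccati equation once more, and eliminating y' with it
   and a' as before, gives the equation for y with parameter nu + eps. *)

From Stdlib Require Import Reals.
From Coquelicot Require Import Coquelicot.
Open Scope C_scope.

Lemma is_derive_C_Re (f : R -> C) (x : R) (l : C) :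
  is_derive f x l -> is_derive (fun t => fst (f t)) x (fst l).
Proof.
  intros Hf.
  apply (filterdiff_ext_lin _ (fun h : R => fst (scal h l))); [|reflexivity].
  apply (filterdiff_comp' f fst x (fun h => scal h l) fst Hf).
  apply filterdiff_linear, is_linear_fst.
Qed.

Lemma is_derive_C_Im (f : R -> C) (x : R) (l : C) :
  is_derive f x l -> is_derive (fun t => snd (f t)) x (snd l).
Proof.
  intros Hf.
  apply (filterdiff_ext_lin _ (fun h : R => snd (scal h l))); [|reflexivity].
  apply (filterdiff_comp' f snd x (fun h => scal h l) snd Hf).
  apply filterdiff_linear, is_linear_snd.
Qed.

Lemma is_derive_C_pair (g1 g2 : R -> R) (x d1 d2 : R) :
  is_derive g1 x d1 -> is_derive g2 x d2 ->
  is_derive (fun t => (g1 t, g2 t) : C) x (d1, d2).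
Proof.
  intros H1 H2.
  apply (filterdiff_ext_lin _ (fun h : R => (scal h d1, scal h d2) : C));
    [|reflexivity].
  apply (filterdiff_comp'_2 g1 g2 (fun u v => (u, v) : C) x _ _
           (fun u v => (u, v)) H1 H2).
  apply (filterdiff_ext_lin _ (fun p => p)); [|now intros []].
  apply (filterdiff_ext (fun p => p)); [now intros []|].
  apply filterdiff_linear, is_linear_id.
Qed.

Lemma is_derive_C_unique (f : R -> C) (x : R) (l1 l2 : C) :
  is_derive f x l1 -> is_derive f x l2 -> l1 = l2.
Proof.
  intros H1 H2; apply injective_projections.
  - rewrite <- (is_derive_unique _ x (fst l1) (is_derive_C_Re _ _ _ H1)).
    exact (is_derive_unique _ x (fst l2) (is_derive_C_Re _ _ _ H2)).
  - rewrite <- (is_derive_unique _ x (snd l1) (is_derive_C_Im _ _ _ H1)).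
    exact (is_derive_unique _ x (snd l2) (is_derive_C_Im _ _ _ H2)).
Qed.

Lemma is_derive_C_replace (f : R -> C) (x : R) (l l' : C) :
  is_derive f x l -> l = l' -> is_derive f x l'.
Proof. now intros Hf <-. Qed.

Lemma is_derive_C_const (c : C) (x : R) : is_derive (fun _ : R => c) x (RtoC 0).
Proof. exact (is_derive_const (K := R_AbsRing) c x). Qed.

Lemma is_derive_C_plus (f g : R -> C) (x : R) (df dg : C) :
  is_derive f x df -> is_derive g x dg -> is_derive (fun t => f t + g t) x (df + dg).
Proof. exact (is_derive_plus f g x df dg). Qed.

Lemma is_derive_C_minus (f g : R -> C) (x : R) (df dg : C) :
  is_derive f x df -> is_derive g x dg -> is_derive (fun t => f t - g t) x (df - dg).
Proof. exact (is_derive_minus f g x df dg). Qed.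

Lemma is_derive_C_opp (f : R -> C) (x : R) (df : C) :
  is_derive f x df -> is_derive (fun t => - f t) x (- df).
Proof. exact (is_derive_opp f x df). Qed.

Lemma is_derive_C_mult (f g : R -> C) (x : R) (df dg : C) :
  is_derive f x df -> is_derive g x dg ->
  is_derive (fun t => f t * g t) x (df * g x + f x * dg).
Proof.
  intros Hf Hg.
  pose proof (is_derive_C_Re _ _ _ Hf) as Hf1; pose proof (is_derive_C_Im _ _ _ Hf) as Hf2.
  pose proof (is_derive_C_Re _ _ _ Hg) as Hg1; pose proof (is_derive_C_Im _ _ _ Hg) as Hg2.
  pose proof (is_derive_C_pair _ _ x _ _
    (is_derive_minus _ _ x _ _ (is_derive_mult _ _ x _ _ Hf1 Hg1 Rmult_comm)
                               (is_derive_mult _ _ x _ _ Hf2 Hg2 Rmult_comm))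
    (is_derive_plus _ _ x _ _ (is_derive_mult _ _ x _ _ Hf1 Hg2 Rmult_comm)
                              (is_derive_mult _ _ x _ _ Hf2 Hg1 Rmult_comm))) as Hfg.
  apply (is_derive_C_replace _ _ _ _ Hfg).
  apply injective_projections; simpl; unfold minus, plus, opp, mult; simpl; ring.
Qed.

Lemma is_derive_C_RtoC (x : R) : is_derive (fun t => RtoC t) x (RtoC 1).
Proof. exact (is_derive_C_pair _ _ x _ _ (is_derive_id x) (is_derive_const 0%R x)). Qed.

Lemma is_derive_C_pow (f : R -> C) (x : R) (df : C) (n : nat) :
  is_derive f x df -> is_derive (fun t => f t ^ S n) x (INR (S n) * f x ^ n * df).
Proof.
  intros Hf; induction n as [|n IHn].
  - replace (INR 1 * f x ^ 0 * df) with (df * 1 + f x * 0) by (simpl; ring).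
    exact (is_derive_C_mult f (fun _ => 1) x _ _ Hf (is_derive_C_const 1 x)).
  - replace (INR (S (S n)) * f x ^ S n * df)
      with (df * f x ^ S n + f x * (INR (S n) * f x ^ n * df))
      by (rewrite (S_INR (S n)), RtoC_plus; simpl; ring).
    exact (is_derive_C_mult f (fun t => f t ^ S n) x _ _ Hf IHn).
Qed.

(* Quotients by constants must be written [x * / c]: [Cdiv] is not matched. *)
Ltac derive_C_poly :=
  let rec go :=
    match goal with
    | |- is_derive (fun _ => ?c) _ _ => apply (is_derive_C_const c)
    | |- is_derive (fun s => RtoC s) _ _ => apply is_derive_C_RtoC
    | |- is_derive (fun s => @?f s ^ S ?n) _ _ => apply (is_derive_C_pow f); go
    | |- is_derive (fun s => @?f s * @?g s) _ _ => apply (is_derive_C_mult f g); go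
    | |- is_derive (fun s => @?f s + @?g s) _ _ => apply (is_derive_C_plus f g); go
    | |- is_derive (fun s => @?f s - @?g s) _ _ => apply (is_derive_C_minus f g); go
    | |- is_derive (fun s => - @?f s) _ _ => apply (is_derive_C_opp f); go
    | |- _ => eassumption
    end in
  eapply is_derive_C_replace;
  [ go
  | cbv beta; rewrite ?S_INR; change (INR 0) with 0%R; rewrite ?RtoC_plus; field ].

Section Elimination.

Variables (nu a a1 a2 y y1 y2 : C) (t eps : R).
Hypothesis eps_sign : eps = 1%R \/ eps = (-1)%R.
Hypothesis a_neq0 : a <> 0.
Hypothesis y_sqr : y ^ 2 = nu / (2 * a ^ 2) - a ^ 2 / 2 - RtoC t - RtoC eps * (a1 / a).

Lemma backlund_a1_eq : a1 = RtoC eps * a * (nu / (2 * a ^ 2) - a ^ 2 / 2 - RtoC t - y ^ 2).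
Proof. rewrite y_sqr; destruct eps_sign as [-> | ->]; field; exact a_neq0. Qed.

Lemma backlund_riccati :
  4 * a ^ 3 * a2 =
    (3 * a ^ 4 + 2 * RtoC t * a ^ 2 - nu) * (a ^ 4 + 2 * RtoC t * a ^ 2 + nu) ->
  2 * a * a1 * y ^ 2 + a ^ 2 * (2 * y * y1) =
    - (2 * a ^ 3 * a1) - a ^ 2 - 2 * RtoC t * a * a1 - RtoC eps * (a2 * a + a1 * a1) ->
  2 * y * y1 =
    - RtoC eps * (nu + RtoC eps - 2 * a ^ 2 * y ^ 2 - y ^ 4 - 2 * RtoC t * y ^ 2).
Proof.
  intros ode_a deriv_id.
  replace (2 * y * y1) with
    ((- (2 * a ^ 3 * a1) - a ^ 2 - 2 * RtoC t * a * a1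
      - RtoC eps * (a2 * a + a1 * a1) - 2 * a * a1 * y ^ 2) / a ^ 2)
    by (rewrite <- deriv_id; field; exact a_neq0).
  replace a2 with
    ((3 * a ^ 4 + 2 * RtoC t * a ^ 2 - nu) * (a ^ 4 + 2 * RtoC t * a ^ 2 + nu)
     / (4 * a ^ 3)) by (rewrite <- ode_a; field; exact a_neq0).
  rewrite backlund_a1_eq.
  destruct eps_sign as [-> | ->]; field; exact a_neq0.
Qed.

Lemma backlund_second_order :
  y <> 0 ->
  2 * y * y1 =
    - RtoC eps * (nu + RtoC eps - 2 * a ^ 2 * y ^ 2 - y ^ 4 - 2 * RtoC t * y ^ 2) ->
  2 * y1 * y1 + 2 * y * y2 =
    - RtoC eps * (- (2 * (2 * a * a1 * y ^ 2 + a ^ 2 * (2 * y * y1)))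
                  - 4 * y ^ 3 * y1 - 2 * (y ^ 2 + RtoC t * (2 * y * y1))) ->
  4 * y ^ 3 * y2 =
    (3 * y ^ 4 + 2 * RtoC t * y ^ 2 - (nu + RtoC eps))
      * (y ^ 4 + 2 * RtoC t * y ^ 2 + (nu + RtoC eps)).
Proof.
  intros y_neq0 riccati deriv_riccati.
  replace y2 with
    ((- RtoC eps * (- (2 * (2 * a * a1 * y ^ 2 + a ^ 2 * (2 * y * y1)))
                    - 4 * y ^ 3 * y1 - 2 * (y ^ 2 + RtoC t * (2 * y * y1)))
      - 2 * y1 * y1) / (2 * y)) by (rewrite <- deriv_riccati; field; exact y_neq0).
  replace y1 with
    (- RtoC eps * (nu + RtoC eps - 2 * a ^ 2 * y ^ 2 - y ^ 4 - 2 * RtoC t * y ^ 2)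
     / (2 * y)) by (rewrite <- riccati; field; exact y_neq0).
  rewrite backlund_a1_eq.
  destruct eps_sign as [-> | ->]; field; auto.
Qed.

End Elimination.

Lemma locally_rbar_open_interval (l u : Rbar) (t : R) :
  rbar_open_interval l u t -> locally t (rbar_open_interval l u).
Proof. exact (open_and _ _ (open_Rbar_gt l) (open_Rbar_lt u) t). Qed.

Lemma is_derive_C_eq_on_open_interval (l u : Rbar) (f g : R -> C) (t : R) (df dg : C) :
  (forall s, rbar_open_interval l u s -> f s = g s) -> rbar_open_interval l u t ->
  is_derive f t df -> is_derive g t dg -> df = dg.
Proof.
  intros fg It Hf Hg.
  apply (is_derive_C_unique g t); [|exact Hg].
  apply (is_derive_ext_loc f g t df); [|exact Hf].
  exact (filter_imp _ _ fg (locally_rbar_open_interval l u t It)).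
Qed.

Section Backlund.

Variables (nu : C) (l u : Rbar) (a a1 a2 y y1 y2 : R -> C) (eps : R).
Let I := rbar_open_interval l u.
Hypothesis eps_sign : eps = 1%R \/ eps = (-1)%R.
Hypothesis a_deriv : twice_deriv_on I a a1 a2.
Hypothesis a_neq0 : forall t, I t -> a t <> 0.
Hypothesis a_ode : forall t, I t ->
  4 * a t ^ 3 * a2 t =
  (3 * a t ^ 4 + 2 * RtoC t * a t ^ 2 - nu) * (a t ^ 4 + 2 * RtoC t * a t ^ 2 + nu).
Hypothesis y_deriv : twice_deriv_on I y y1 y2.
Hypothesis y_sqr : forall t, I t ->
  y t ^ 2 = nu / (2 * a t ^ 2) - a t ^ 2 / 2 - RtoC t - RtoC eps * (a1 t / a t).

Lemma backlund_riccati_on : forall t, I t ->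
  2 * y t * y1 t =
  - RtoC eps * (nu + RtoC eps - 2 * a t ^ 2 * y t ^ 2 - y t ^ 4 - 2 * RtoC t * y t ^ 2).
Proof.
  intros t It.
  destruct (a_deriv t It), (y_deriv t It).
  apply (backlund_riccati nu (a t) (a1 t) (a2 t)); auto.
  apply (is_derive_C_eq_on_open_interval l u (fun s => a s ^ 2 * y s ^ 2)
    (fun s => nu * / 2 - a s ^ 4 * / 2 - RtoC s * a s ^ 2 - RtoC eps * (a1 s * a s)) t);
    [| exact It | derive_C_poly | derive_C_poly].
  intros s Is; rewrite (y_sqr s Is); field; exact (a_neq0 s Is).
Qed.

Hypothesis y_neq0 : forall t, I t -> y t <> 0.

Lemma backlund_second_order_on : forall t, I t ->
  4 * y t ^ 3 * y2 t =
  (3 * y t ^ 4 + 2 * RtoC t * y t ^ 2 - (nu + RtoC eps))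
    * (y t ^ 4 + 2 * RtoC t * y t ^ 2 + (nu + RtoC eps)).
Proof.
  intros t It.
  destruct (a_deriv t It), (y_deriv t It).
  apply (backlund_second_order nu (a t) (a1 t) (y t) (y1 t)); auto.
  - exact (backlund_riccati_on t It).
  - apply (is_derive_C_eq_on_open_interval l u (fun s => 2 * y s * y1 s)
      (fun s => - RtoC eps * (nu + RtoC eps - 2 * a s ^ 2 * y s ^ 2 - y s ^ 4
                               - 2 * RtoC s * y s ^ 2)) t);
      [exact backlund_riccati_on | exact It | derive_C_poly | derive_C_poly].
Qed.

End Backlund.

Theorem mainTheorem13 (nu : C) (l u : Rbar) (a a1 a2 : R -> C) (eps : R)
  (y y1 y2 : R -> C) :
  Rbar_lt l u ->
  twice_deriv_on (rbar_open_interval l u) a a1 a2 ->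
  (forall t, rbar_open_interval l u t -> a t <> 0) ->
  (forall t, rbar_open_interval l u t ->
     4 * a t ^ 3 * a2 t =
     (3 * a t ^ 4 + 2 * RtoC t * a t ^ 2 - nu) * (a t ^ 4 + 2 * RtoC t * a t ^ 2 + nu)) ->
  (eps = 1%R \/ eps = (-1)%R) ->
  twice_deriv_on (rbar_open_interval l u) y y1 y2 ->
  (forall t, rbar_open_interval l u t -> y t <> 0) ->
  (forall t, rbar_open_interval l u t ->
     y t ^ 2 = nu / (2 * a t ^ 2) - a t ^ 2 / 2 - RtoC t - RtoC eps * (a1 t / a t)) ->
  (forall t, rbar_open_interval l u t ->
     2 * y t * y1 t =
     - RtoC eps * (nu + RtoC eps - 2 * a t ^ 2 * y t ^ 2 - y t ^ 4 - 2 * RtoC t * y t ^ 2))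
  /\
  (forall t, rbar_open_interval l u t ->
     4 * y t ^ 3 * y2 t =
     (3 * y t ^ 4 + 2 * RtoC t * y t ^ 2 - (nu + RtoC eps))
       * (y t ^ 4 + 2 * RtoC t * y t ^ 2 + (nu + RtoC eps))).
Proof.
  intros _ a_deriv a_neq0 a_ode eps_sign y_deriv y_neq0 y_sqr.
  split.
  - exact (backlund_riccati_on nu l u a a1 a2 y y1 y2 eps
             eps_sign a_deriv a_neq0 a_ode y_deriv y_sqr).
  - exact (backlund_second_order_on nu l u a a1 a2 y y1 y2 eps
             eps_sign a_deriv a_neq0 a_ode y_deriv y_sqr y_neq0).
Qed.
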